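(* In the setting of the context (the canonical generalized multi-time Lagrange space associated with a quadratic multi-time Lagrangian, with its Cartan connection $C\Gamma$), the Ricci d-tensor $Ric(C\Gamma)$ has adapted components $$R_{\alpha\beta}=H_{\alpha\beta}=H^\mu_{\alpha\beta\mu},\quad R^{\ (\alpha)}_{i(j)}=P^{\ (\alpha)}_{i(j)}=-P^{m\ (\alpha)}_{im(j)}=0,\quad R^{(\alpha)}_{(i)j}=P^{(\alpha)}_{(i)j}=P^{m\ (\alpha)}_{ij(m)}=0,$$ $$R^{(\alpha)}_{(i)\beta}=P^{(\alpha)}_{(i)\beta}=P^{m\ (\alpha)}_{i\beta(m)}=0,\quad R^{(\alpha)(\beta)}_{(i)(j)}=S^{(\alpha)(\beta)}_{(i)(j)}=S^{m(\beta)(\alpha)}_{i(j)(m)}=0,\quad R_{i\alpha}=R^m_{i\alpha m},\quad R_{ij}=R^m_{ijm}.$$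
   Context: Setting: $T$ is a $p$-dimensional manifold (coordinates $t^\alpha$) with semi-Riemannian metric $h_{\alpha\beta}(t)$ and Christoffel symbols $H^\gamma_{\alpha\beta}$; $M$ is an $n$-dimensional manifold; on $J^1(T,M)$ (coordinates $(t^\alpha,x^i,x^i_\alpha)$) $L=G^{(\alpha)(\beta)}_{(i)(j)}(t,x)x^i_\alpha x^j_\beta+U^{(\alpha)}_{(i)}(t,x)x^i_\alpha+F(t,x)$ with $G^{(\alpha)(\beta)}_{(i)(j)}=\frac12\partial^2L/\partial x^i_\alpha\partial x^j_\beta$ symmetric, of rank $n$, constant signature in $i,j$; $g_{ij}=\frac1p h_{\mu\nu}G^{(\mu)(\nu)}_{(i)(j)}$ with inverse $g^{ij}$; $\Gamma^i_{jk}$ its generalized Christoffel symbols in $x$. Nonlinear connection $M^{(i)}_{(\alpha)\beta}=-H^\gamma_{\alpha\beta}x^i_\gamma$, $N^{(i)}_{(\alpha)j}=\Gamma^i_{jm}x^m_\alpha+\frac{g^{im}}{2}\frac{\partial g_{jm}}{\partial t^\alpha}$, adapted derivations $\frac{\delta}{\delta t^\alpha}=\partial_{t^\alpha}-M^{(j)}_{(\beta)\alpha}\partial_{x^j_\beta}$, $\frac{\delta}{\delta x^i}=\partial_{x^i}-N^{(j)}_{(\beta)i}\partial_{x^j_\beta}$. Cartan connection $C\Gamma=(H^\gamma_{\alpha\beta},G^k_{j\gamma},L^i_{jk},C^{i(\gamma)}_{j(k)})$ with $G^k_{j\gamma}=\frac{g^{km}}{2}\frac{\delta g_{mj}}{\delta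 t^\gamma}$, $L^i_{jk}=\frac{g^{im}}{2}(\frac{\delta g_{jm}}{\delta x^k}+\frac{\delta g_{km}}{\delta x^j}-\frac{\delta g_{jk}}{\delta x^m})$, $C^{i(\gamma)}_{j(k)}=\frac{g^{im}}{2}(\frac{\partial g_{jm}}{\partial x^k_\gamma}+\frac{\partial g_{km}}{\partial x^j_\gamma}-\frac{\partial g_{jk}}{\partial x^m_\gamma})$. Its curvature d-tensors are $H^\alpha_{\eta\beta\gamma}=\frac{\delta H^\alpha_{\eta\beta}}{\delta t^\gamma}-\frac{\delta H^\alpha_{\eta\gamma}}{\delta t^\beta}+H^\mu_{\eta\beta}H^\alpha_{\mu\gamma}-H^\mu_{\eta\gamma}H^\alpha_{\mu\beta}$; $R^l_{i\beta k}=\frac{\delta G^l_{i\beta}}{\delta x^k}-\frac{\delta L^l_{ik}}{\delta t^\beta}+G^m_{i\beta}L^l_{mk}-L^m_{ik}G^l_{m\beta}+C^{l(\mu)}_{i(m)}R^{(m)}_{(\mu)\beta k}$; $R^l_{ijk}=\frac{\delta L^l_{ij}}{\delta x^k}-\frac{\delta L^l_{ik}}{\delta x^j}+L^m_{ij}L^l_{mk}-L^m_{ik}L^l_{mj}+C^{l(\mu)}_{i(m)}R^{(m)}_{(\mu)jk}$; $P^{l\,(\gamma)}_{i\beta(k)}=\frac{\partial G^l_{i\beta}}{\partial x^k_\gamma}-C^{l(\gamma)}_{i(k)/\beta}+C^{l(\mu)}_{i(m)}P^{(m)(\gamma)}_{(\mu)\beta(k)}$; $P^{l\,(\gamma)}_{ij(k)}=\frac{\partial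 L^l_{ij}}{\partial x^k_\gamma}-C^{l(\gamma)}_{i(k)|j}+C^{l(\mu)}_{i(m)}P^{(m)(\gamma)}_{(\mu)j(k)}$; $S^{l(\beta)(\gamma)}_{i(j)(k)}=\frac{\partial C^{l(\beta)}_{i(j)}}{\partial x^k_\gamma}-\frac{\partial C^{l(\gamma)}_{i(k)}}{\partial x^j_\beta}+C^{m(\beta)}_{i(j)}C^{l(\gamma)}_{m(k)}-C^{m(\gamma)}_{i(k)}C^{l(\beta)}_{m(j)}$; here $R^{(m)}_{(\mu)\beta k}=\frac{\delta M^{(m)}_{(\mu)\beta}}{\delta x^k}-\frac{\delta N^{(m)}_{(\mu)k}}{\delta t^\beta}$, $R^{(m)}_{(\mu)jk}=\frac{\delta N^{(m)}_{(\mu)j}}{\delta x^k}-\frac{\delta N^{(m)}_{(\mu)k}}{\delta x^j}$, $P^{(m)(\gamma)}_{(\mu)\beta(k)}=\frac{\partial M^{(m)}_{(\mu)\beta}}{\partial x^k_\gamma}-\delta^\gamma_\mu G^m_{k\beta}+\delta^m_kH^\gamma_{\mu\beta}$, $P^{(m)(\gamma)}_{(\mu)j(k)}=\frac{\partial N^{(m)}_{(\mu)j}}{\partial x^k_\gamma}-\delta^\gamma_\mu L^m_{jk}$, and ''$_{/\beta}$'', ''$_{|j}$'' are the horizontal covariant derivatives of $C\Gamma$. The adapted components of the Ricci d-tensor are the contractions named by the middle expressions of the claim ($R_{\alpha\beta}=H^\mu_{\alpha\beta\mu}$, $R^{\ (\alpha)}_{i(j)}=-P^{m\ (\alpha)}_{im(j)}$,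 $R^{(\alpha)}_{(i)j}=P^{m\ (\alpha)}_{ij(m)}$, $R^{(\alpha)}_{(i)\beta}=P^{m\ (\alpha)}_{i\beta(m)}$, $R^{(\alpha)(\beta)}_{(i)(j)}=S^{m(\beta)(\alpha)}_{i(j)(m)}$, $R_{i\alpha}=R^m_{i\alpha m}$, $R_{ij}=R^m_{ijm}$). *)

(* A point of J^1(T,M) in a chart is (t, x, y) with t : 'rV_p (t^alpha),
   x : 'rV_n (x^i) and y : 'M_(n,p) with  y i alpha = x^i_alpha. *)
From HB Require Import structures.
From mathcomp Require Import all_boot all_order all_algebra.
From mathcomp Require Import all_classical all_reals all_analysis.
Set Implicit Arguments. Unset Strict Implicit. Unset Printing Implicit Defensive.
Import Order.TTheory GRing.Theory Num.Theory.
Local Open Scope ring_scope.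

Section MultiTime.
Variable R : realType.
Variables p n : nat.

Definition Jfun := 'rV[R]_p -> 'rV[R]_n -> 'M[R]_(n, p) -> R.

Definition dirD (V : lmodType R) (f : V -> R) (a v : V) : R :=
  derive1 (fun s : R => f (a + s *: v)) 0.

Definition pt (a : 'I_p) (f : Jfun) : Jfun :=
  fun t x y => dirD (fun t' => f t' x y) t (delta_mx 0 a).
Definition px (i : 'I_n) (f : Jfun) : Jfun :=
  fun t x y => dirD (fun x' => f t x' y) x (delta_mx 0 i).
Definition py (i : 'I_n) (a : 'I_p) (f : Jfun) : Jfun :=
  fun t x y => dirD (fun y' => f t x y') y (delta_mx i a).

Variable h : 'rV[R]_p -> 'M[R]_p.

Definition Hch (c a b : 'I_p) : Jfun := fun t _ _ =>
  2^-1 * \sum_(m < p) invmx (h t) c m *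
    (dirD (fun t' => h t' b m) t (delta_mx 0 a)
     + dirD (fun t' => h t' a m) t (delta_mx 0 b)
     - dirD (fun t' => h t' a b) t (delta_mx 0 m)).

(* G a b i j t x = G^{(a)(b)}_{(i)(j)}(t,x) *)
Variable G : 'I_p -> 'I_p -> 'I_n -> 'I_n -> 'rV[R]_p -> 'rV[R]_n -> R.

(* the quadratic multi-time Lagrangian (for reference) *)
Definition Lag (U : 'I_p -> 'I_n -> 'rV[R]_p -> 'rV[R]_n -> R)
  (F : 'rV[R]_p -> 'rV[R]_n -> R) : Jfun := fun t x y =>
  \sum_(a < p) \sum_(b < p) \sum_(i < n) \sum_(j < n) G a b i j t x * y i a * y j b
  + \sum_(a < p) \sum_(i < n) U a i t x * y i a + F t x.

Definition gJ (i j : 'I_n) : Jfun := fun t x _ =>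
  p%:R^-1 * \sum_(mu < p) \sum_(nu < p) h t mu nu * G mu nu i j t x.
Definition gmx t x : 'M[R]_n := \matrix_(i, j) gJ i j t x 0.
Definition ginv (i j : 'I_n) : Jfun := fun t x _ => invmx (gmx t x) i j.

Definition Gam (i j k : 'I_n) : Jfun := fun t x y =>
  2^-1 * \sum_(m < n) ginv i m t x y *
    (px j (gJ k m) t x y + px k (gJ j m) t x y - px m (gJ j k) t x y).

Definition Mnl (i : 'I_n) (a b : 'I_p) : Jfun := fun t x y =>
  - \sum_(c < p) Hch c a b t x y * y i c.
Definition Nnl (i : 'I_n) (a : 'I_p) (j : 'I_n) : Jfun := fun t x y =>
  \sum_(m < n) Gam i j m t x y * y m a
  + 2^-1 * \sum_(m < n) ginv i m t x y * pt a (gJ j m) t x y.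

Definition dt (a : 'I_p) (f : Jfun) : Jfun := fun t x y =>
  pt a f t x y - \sum_(j < n) \sum_(b < p) Mnl j b a t x y * py j b f t x y.
Definition dx (i : 'I_n) (f : Jfun) : Jfun := fun t x y =>
  px i f t x y - \sum_(j < n) \sum_(b < p) Nnl j b i t x y * py j b f t x y.

(* Cartan connection: Gc k j c = G^k_{jc}, Lc i j k = L^i_{jk},
   Cc i j k c = C^{i(c)}_{j(k)} *)
Definition Gc (k j : 'I_n) (c : 'I_p) : Jfun := fun t x y =>
  2^-1 * \sum_(m < n) ginv k m t x y * dt c (gJ m j) t x y.
Definition Lc (i j k : 'I_n) : Jfun := fun t x y =>
  2^-1 * \sum_(m < n) ginv i m t x y *
    (dx k (gJ j m) t x y + dx j (gJ k m) t x y - dx m (gJ j k) t x y).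
Definition Cc (i j k : 'I_n) (c : 'I_p) : Jfun := fun t x y =>
  2^-1 * \sum_(m < n) ginv i m t x y *
    (py k c (gJ j m) t x y + py j c (gJ k m) t x y - py m c (gJ j k) t x y).

Definition Rnl_tx (m : 'I_n) (mu b : 'I_p) (k : 'I_n) : Jfun := fun t x y =>
  dx k (Mnl m mu b) t x y - dt b (Nnl m mu k) t x y.
Definition Rnl_xx (m : 'I_n) (mu : 'I_p) (j k : 'I_n) : Jfun := fun t x y =>
  dx k (Nnl m mu j) t x y - dx j (Nnl m mu k) t x y.
(* Pnl_ty m mu b k c = P^{(m)(c)}_{(mu) b (k)} *)
Definition Pnl_ty (m : 'I_n) (mu b : 'I_p) (k : 'I_n) (c : 'I_p) : Jfun :=
  fun t x y => py k c (Mnl m mu b) t x y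
    - (c == mu)%:R * Gc m k b t x y + (m == k)%:R * Hch c mu b t x y.
(* Pnl_xy m mu j k c = P^{(m)(c)}_{(mu) j (k)} *)
Definition Pnl_xy (m : 'I_n) (mu : 'I_p) (j k : 'I_n) (c : 'I_p) : Jfun :=
  fun t x y => py k c (Nnl m mu j) t x y - (c == mu)%:R * Lc m j k t x y.

(* horizontal covariant derivatives of C (Cartan connection):
   Ccov_t l i k c b = C^{l(c)}_{i(k)/b},  Ccov_x l i k c j = C^{l(c)}_{i(k)|j} *)
Definition Ccov_t (l i k : 'I_n) (c b : 'I_p) : Jfun := fun t x y =>
  dt b (Cc l i k c) t x y
  + \sum_(m < n) Cc m i k c t x y * Gc l m b t x y
  + \sum_(mu < p) Cc l i k mu t x y * Hch c mu b t x y
  - \sum_(m < n) Cc l m k c t x y * Gc m i b t x y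
  - \sum_(m < n) Cc l i m c t x y * Gc m k b t x y.
Definition Ccov_x (l i k : 'I_n) (c : 'I_p) (j : 'I_n) : Jfun := fun t x y =>
  dx j (Cc l i k c) t x y
  + \sum_(m < n) Cc m i k c t x y * Lc l m j t x y
  - \sum_(m < n) Cc l m k c t x y * Lc m i j t x y
  - \sum_(m < n) Cc l i m c t x y * Lc m k j t x y.

Definition Hcurv (a e b c : 'I_p) : Jfun := fun t x y =>
  dt c (Hch a e b) t x y - dt b (Hch a e c) t x y
  + \sum_(mu < p) (Hch mu e b t x y * Hch a mu c t x y
                   - Hch mu e c t x y * Hch a mu b t x y).
Definition R_tx (l i : 'I_n) (b : 'I_p) (k : 'I_n) : Jfun := fun t x y =>
  dx k (Gc l i b) t x y - dt b (Lc l i k) t x y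
  + \sum_(m < n) (Gc m i b t x y * Lc l m k t x y - Lc m i k t x y * Gc l m b t x y)
  + \sum_(m < n) \sum_(mu < p) Cc l i m mu t x y * Rnl_tx m mu b k t x y.
Definition R_xx (l i j k : 'I_n) : Jfun := fun t x y =>
  dx k (Lc l i j) t x y - dx j (Lc l i k) t x y
  + \sum_(m < n) (Lc m i j t x y * Lc l m k t x y - Lc m i k t x y * Lc l m j t x y)
  + \sum_(m < n) \sum_(mu < p) Cc l i m mu t x y * Rnl_xx m mu j k t x y.
(* P_ty l i b k c = P^{l (c)}_{i b (k)} *)
Definition P_ty (l i : 'I_n) (b : 'I_p) (k : 'I_n) (c : 'I_p) : Jfun := fun t x y =>
  py k c (Gc l i b) t x y - Ccov_t l i k c b t x y
  + \sum_(m < n) \sum_(mu < p) Cc l i m mu t x y * Pnl_ty m mu b k c t x y.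
(* P_xy l i j k c = P^{l (c)}_{i j (k)} *)
Definition P_xy (l i j k : 'I_n) (c : 'I_p) : Jfun := fun t x y =>
  py k c (Lc l i j) t x y - Ccov_x l i k c j t x y
  + \sum_(m < n) \sum_(mu < p) Cc l i m mu t x y * Pnl_xy m mu j k c t x y.
(* S_yy l i j k b c = S^{l (b)(c)}_{i (j)(k)} *)
Definition S_yy (l i j k : 'I_n) (b c : 'I_p) : Jfun := fun t x y =>
  py k c (Cc l i j b) t x y - py j b (Cc l i k c) t x y
  + \sum_(m < n) (Cc m i j b t x y * Cc l m k c t x y
                  - Cc m i k c t x y * Cc l m j b t x y).

Definition Ric_tt (a b : 'I_p) : Jfun := fun t x y =>
  \sum_(mu < p) Hcurv mu a b mu t x y.
Definition Ric_iyj (i j : 'I_n) (a : 'I_p) : Jfun := fun t x y =>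
  - \sum_(m < n) P_xy m i m j a t x y.
Definition Ric_yix (i j : 'I_n) (a : 'I_p) : Jfun := fun t x y =>
  \sum_(m < n) P_xy m i j m a t x y.
Definition Ric_yit (i : 'I_n) (a b : 'I_p) : Jfun := fun t x y =>
  \sum_(m < n) P_ty m i b m a t x y.
Definition Ric_yy (i j : 'I_n) (a b : 'I_p) : Jfun := fun t x y =>
  \sum_(m < n) S_yy m i j m b a t x y.
Definition Ric_xt (i : 'I_n) (a : 'I_p) : Jfun := fun t x y =>
  \sum_(m < n) R_tx m i a m t x y.
Definition Ric_xx (i j : 'I_n) : Jfun := fun t x y =>
  \sum_(m < n) R_xx m i j m t x y.

End MultiTime.

(* The metric g_{ij} = 1/p h_{mu nu}(t) G^{(mu)(nu)}_{(i)(j)}(t, x) does not depend on the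
   fibre coordinates x^i_alpha.  Hence the vertical Cartan coefficients C^{i(gamma)}_{j(k)}
   vanish, the adapted derivations act on g as plain partial derivatives (so G^k_{j gamma} and
   L^i_{jk} are again independent of x^i_alpha), and every curvature d-tensor with a vertical
   index -- P^{l (gamma)}_{i beta (k)}, P^{l (gamma)}_{i j (k)} and S -- is zero.  The other
   Ricci components are their defining contractions.  No nondegeneracy hypothesis is needed. *)
From HB Require Import structures.
From mathcomp Require Import all_boot all_order all_algebra.
From mathcomp Require Import all_classical all_reals all_analysis.
Import Order.TTheory GRing.Theory Num.Theory.
Local Open Scope ring_scope.

Lemma dirD_const (R : realType) (V : lmodType R) (f : V -> R) (a v : V) :
  (forall w, f w = f a) -> dirD f a v = 0.
Proof.
move=> f_const; rewrite /dirD.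
have -> : (fun s : R => f (a + s *: v)) = cst (f a) by apply: funext => s.
exact: derive1_cst.
Qed.

Section CartanConnection.
Variable R : realType.
Variables p n : nat.
Variable h : 'rV[R]_p -> 'M[R]_p.
Variable G : 'I_p -> 'I_p -> 'I_n -> 'I_n -> 'rV[R]_p -> 'rV[R]_n -> R.

Definition constant_in_y (f : Jfun R p n) := forall t x y y', f t x y' = f t x y.

Lemma py_constant_in_y f i c t x y : constant_in_y f -> py i c f t x y = 0.
Proof. by move=> f_y; apply: dirD_const. Qed.

Lemma dt_constant_in_y f b t x y : constant_in_y f -> dt h b f t x y = pt b f t x y.
Proof.
move=> f_y; rewrite /dt big1 ?subr0 // => j _.
by rewrite big1 // => c _; rewrite py_constant_in_y ?mulr0.
Qed.

Lemma dx_constant_in_y f k t x y : constant_in_y f -> dx h G k f t x y = px k f t x y.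
Proof.
move=> f_y; rewrite /dx big1 ?subr0 // => j _.
by rewrite big1 // => c _; rewrite py_constant_in_y ?mulr0.
Qed.

Lemma dt_cst (c : R) b t x y : dt h b ((fun _ _ _ => c) : Jfun R p n) t x y = 0.
Proof. by rewrite dt_constant_in_y //; apply: dirD_const. Qed.

Lemma dx_cst (c : R) k t x y : dx h G k ((fun _ _ _ => c) : Jfun R p n) t x y = 0.
Proof. by rewrite dx_constant_in_y //; apply: dirD_const. Qed.

Lemma gJ_constant_in_y i j : constant_in_y (gJ h G i j).
Proof. by []. Qed.

Lemma Gc_constant_in_y k j c : constant_in_y (Gc h G k j c).
Proof.
move=> t x y y'; rewrite /Gc; congr (_ * _); apply: eq_bigr => m _.
by rewrite !(dt_constant_in_y _ _ _ _ _ (gJ_constant_in_y _ _)).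
Qed.

Lemma Lc_constant_in_y i j k : constant_in_y (Lc h G i j k).
Proof.
move=> t x y y'; rewrite /Lc; congr (_ * _); apply: eq_bigr => m _.
by rewrite !(dx_constant_in_y _ _ _ _ _ (gJ_constant_in_y _ _)).
Qed.

Lemma Cc_eq0 i j k c : Cc h G i j k c = fun _ _ _ => 0.
Proof.
apply: funext => t; apply: funext => x; apply: funext => y.
rewrite /Cc big1 ?mulr0 // => m _.
by rewrite !(py_constant_in_y _ _ _ _ _ _ (gJ_constant_in_y _ _)) addr0 subrr mulr0.
Qed.

Lemma Ccov_t_eq0 l i k c b t x y : Ccov_t h G l i k c b t x y = 0.
Proof.
rewrite /Ccov_t Cc_eq0 dt_cst !big1 ?addr0 ?subr0 // => m _; by rewrite Cc_eq0 /= mul0r.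
Qed.

Lemma Ccov_x_eq0 l i k c j t x y : Ccov_x h G l i k c j t x y = 0.
Proof.
rewrite /Ccov_x Cc_eq0 dx_cst !big1 ?addr0 ?subr0 // => m _; by rewrite Cc_eq0 /= mul0r.
Qed.

Lemma P_ty_eq0 l i b k c t x y : P_ty h G l i b k c t x y = 0.
Proof.
rewrite /P_ty Ccov_t_eq0 py_constant_in_y ?subrr ?add0r; last exact: Gc_constant_in_y.
by rewrite big1 // => m _; rewrite big1 // => mu _; rewrite Cc_eq0 /= mul0r.
Qed.

Lemma P_xy_eq0 l i j k c t x y : P_xy h G l i j k c t x y = 0.
Proof.
rewrite /P_xy Ccov_x_eq0 py_constant_in_y ?subrr ?add0r; last exact: Lc_constant_in_y.
by rewrite big1 // => m _; rewrite big1 // => mu _; rewrite Cc_eq0 /= mul0r.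
Qed.

Lemma S_yy_eq0 l i j k b c t x y : S_yy h G l i j k b c t x y = 0.
Proof.
rewrite /S_yy (Cc_eq0 l i j b) (Cc_eq0 l i k c) !py_constant_in_y // subrr add0r.
by rewrite big1 // => m _; rewrite (Cc_eq0 m i j b) (Cc_eq0 m i k c) /= !mul0r subrr.
Qed.

End CartanConnection.

Theorem mainTheorem3 (R : realType) (p n : nat)
  (h : 'rV[R]_p -> 'M[R]_p)
  (G : 'I_p -> 'I_p -> 'I_n -> 'I_n -> 'rV[R]_p -> 'rV[R]_n -> R)
  (U : 'I_p -> 'I_n -> 'rV[R]_p -> 'rV[R]_n -> R)
  (F : 'rV[R]_p -> 'rV[R]_n -> R) :
  (0 < p)%N ->
  (forall t, (h t)^T = h t) ->
  (forall t, h t \in unitmx) ->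
  (forall a b i j t x, G a b i j t x = G b a j i t x) ->
  (forall t x, gmx h G t x \in unitmx) ->
  forall (t : 'rV[R]_p) (x : 'rV[R]_n) (y : 'M[R]_(n, p)),
    (forall a b, Ric_tt h a b t x y = \sum_(mu < p) Hcurv h mu a b mu t x y)
 /\ (forall i j a, Ric_iyj h G i j a t x y = 0)
 /\ (forall i j a, Ric_yix h G i j a t x y = 0)
 /\ (forall i a b, Ric_yit h G i a b t x y = 0)
 /\ (forall i j a b, Ric_yy h G i j a b t x y = 0)
 /\ (forall i a, Ric_xt h G i a t x y = \sum_(m < n) R_tx h G m i a m t x y)
 /\ (forall i j, Ric_xx h G i j t x y = \sum_(m < n) R_xx h G m i j m t x y).
Proof.
move=> _ _ _ _ _ t x y.
do 6?split; move=> *; try reflexivity.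
- by rewrite /Ric_iyj big1 ?oppr0 // => m _; apply: P_xy_eq0.
- by rewrite /Ric_yix big1 // => m _; apply: P_xy_eq0.
- by rewrite /Ric_yit big1 // => m _; apply: P_ty_eq0.
- by rewrite /Ric_yy big1 // => m _; apply: S_yy_eq0.
Qed.
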